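(* Let $R$ be a commutative Noetherian ring of prime characteristic $p$ and $G$ an $x$-torsion-free left $R[x,f]$-module. Then $\mathcal{I}(G)=\{\mathfrak{p}_1\cap\dots\cap\mathfrak{p}_t: t\in\mathbb{N}_0,\ \mathfrak{p}_1,\dots,\mathfrak{p}_t\in\mathcal{I}(G)\cap\operatorname{Spec}(R)\}$, where the empty intersection ($t=0$) is $R$.
   Context: $R[x,f]$ is the Frobenius skew polynomial ring: free left $R$-module on $(x^i)_{i\ge0}$, $xr=r^px$. $x$-torsion-free: $xg=0\Rightarrow g=0$. $\operatorname{grann}N$ is the set of $\sum r_ix^i$ with each $r_ix^i$ annihilating the $R[x,f]$-submodule $N$. $\mathcal{I}(G)$ (the $G$-special $R$-ideals) is the set of ideals $\mathfrak{b}$ of $R$ with $\operatorname{grann}N=\bigoplus_{n\ge0}\mathfrak{b}x^n$ for some $R[x,f]$-submodule $N$ of $G$. *)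

From mathcomp Require Import all_boot all_order all_algebra.
Set Implicit Arguments. Unset Strict Implicit. Unset Printing Implicit Defensive.
Import GRing.Theory.
Local Open Scope ring_scope.

Definition is_ideal (R : comNzRingType) (I : R -> Prop) : Prop :=
  I 0 /\ (forall a b, I a -> I b -> I (a + b)) /\ (forall r a, I a -> I (r * a)).

Definition noetherian (R : comNzRingType) : Prop :=
  forall I : nat -> R -> Prop,
    (forall n, is_ideal (I n)) ->
    (forall n r, I n r -> I n.+1 r) ->
    exists N, forall n, (N <= n)%N -> forall r, I n r <-> I N r.

Definition is_prime_ideal (R : comNzRingType) (P : R -> Prop) : Prop :=
  is_ideal P /\ ~ P 1 /\ (forall a b, P (a * b) -> P a \/ P b).

(* A left R[x,f]-module structure on the R-module V: the action of x is
   an additive map phi with phi (r *: g) = r^p *: phi g  (x r = r^p x). *)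
Definition frob_skew (R : comNzRingType) (p : nat) (V : lmodType R) (phi : V -> V) : Prop :=
  (forall g h, phi (g + h) = phi g + phi h) /\
  (forall (r : R) g, phi (r *: g) = r ^+ p *: phi g).

Definition x_torsion_free (R : comNzRingType) (V : lmodType R) (phi : V -> V) : Prop :=
  forall g, phi g = 0 -> g = 0.

Definition is_Rxf_submodule (R : comNzRingType) (V : lmodType R) (phi : V -> V)
    (N : V -> Prop) : Prop :=
  N 0 /\ (forall g h, N g -> N h -> N (g + h)) /\
  (forall (r : R) g, N g -> N (r *: g)) /\ (forall g, N g -> N (phi g)).

(* r x^n annihilates N  iff  r * x^n * g = r *: phi^n g = 0 for all g in N. *)
Definition monomial_annihilates (R : comNzRingType) (V : lmodType R) (phi : V -> V)
    (N : V -> Prop) (r : R) (n : nat) : Prop :=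
  forall g, N g -> r *: iter n phi g = 0.

(* grann N = (+)_{n>=0} b x^n: for every n, the coefficients r with
   r x^n in grann N are exactly the elements of b. *)
Definition grann_eq (R : comNzRingType) (V : lmodType R) (phi : V -> V)
    (N : V -> Prop) (b : R -> Prop) : Prop :=
  forall (n : nat) (r : R), monomial_annihilates phi N r n <-> b r.

Definition G_special (R : comNzRingType) (V : lmodType R) (phi : V -> V)
    (b : R -> Prop) : Prop :=
  is_ideal b /\ exists N, is_Rxf_submodule phi N /\ grann_eq phi N b.

From mathcomp Require Import all_boot all_order all_algebra.
From mathcomp Require Import zify.
From Stdlib Require Import Classical ClassicalEpsilon.
Local Open Scope ring_scope.
Import GRing.Theory.
Set Implicit Arguments.
Unset Strict Implicit.

(* Call an ideal b closed (grann_closed) if it is the coefficient ideal of the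
   graded annihilator of ann_G(b R[x,f]).  Because G is x-torsion-free,
   r x^n kills g exactly when r kills g, so the G-special ideals are exactly
   the closed ones.  Closed ideals are stable under colons (b : J) and, as x
   raises coefficients to the p-th power, they are radical.  Hence, by
   Noetherian induction, a closed ideal b that is neither R nor prime, with
   a c in b and a, c not in b, is the intersection of the strictly larger
   closed ideals b1 = (b : a) and (b : b1), and so a finite intersection of
   closed primes.  Conversely, the intersection of closed ideals b_i is the
   coefficient ideal of the graded annihilator of the union of the
   ann_G(b_i R[x,f]), hence closed. *)

Section IdealDecomposition.
Variable R : comNzRingType.

Definition strict_incl (b b' : R -> Prop) : Prop :=
  (forall r, b r -> b' r) /\ exists r, b' r /\ ~ b r.

Definition colon (b J : R -> Prop) (r : R) : Prop := forall j, J j -> b (r * j).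

Definition prime_meet (S : (R -> Prop) -> Prop) (b : R -> Prop) : Prop :=
  exists (t : nat) (P : nat -> R -> Prop),
    (forall i, (i < t)%N -> is_prime_ideal (P i) /\ S (P i)) /\
    (forall r, b r <-> (forall i, (i < t)%N -> P i r)).

Lemma ideal_mulr (b : R -> Prop) r s : is_ideal b -> b r -> b (r * s).
Proof. by case=> _ [_ hM] br; rewrite mulrC; apply: hM. Qed.

Lemma colon_incl (b J : R -> Prop) r : is_ideal b -> b r -> colon b J r.
Proof. by move=> hb br j _; apply: ideal_mulr. Qed.

Lemma noetherian_no_strict_chain (I : nat -> R -> Prop) :
  noetherian R -> (forall n, is_ideal (I n)) ->
  ~ (forall n, strict_incl (I n) (I n.+1)).
Proof.
move=> hR hI hchain.
have [N hN] := hR I hI (fun n => proj1 (hchain n)).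
have [r [r_next r_notN]] := proj2 (hchain N).
by apply/r_notN/(hN N.+1 (leqnSn N)).
Qed.

Lemma noetherian_ind (P : (R -> Prop) -> Prop) : noetherian R ->
  (forall b, is_ideal b ->
     (forall b', is_ideal b' -> strict_incl b b' -> P b') -> P b) ->
  forall b, is_ideal b -> P b.
Proof.
move=> hR step b0 hb0; apply: NNPP => hPb0.
pose bad := {b : R -> Prop | is_ideal b /\ ~ P b}.
have bad_next (x : bad) : exists y : bad, strict_incl (sval x) (sval y).
  case: x => b [hb hPb] /=; apply: NNPP => hnone; apply/hPb/step => // b' hb' hbb'.
  by apply: NNPP => hPb'; apply: hnone; exists (exist _ b' (conj hb' hPb')).
pose next (x : bad) := sval (constructive_indefinite_description _ (bad_next x)).
have next_strict (x : bad) : strict_incl (sval x) (sval (next x)).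
  exact: svalP (constructive_indefinite_description _ (bad_next x)).
pose chain n := iter n next (exist _ b0 (conj hb0 hPb0)).
apply: (@noetherian_no_strict_chain (fun n => sval (chain n))) => // n.
by case: (svalP (chain n)).
Qed.

Lemma prime_meet_full S (b : R -> Prop) : is_ideal b -> b 1 -> prime_meet S b.
Proof.
move=> hb b1; exists 0%N, (fun _ _ => True); split => // r.
by split => // _; rewrite -(mulr1 r); apply: (proj2 (proj2 hb)).
Qed.

Lemma prime_meet_prime (S : (R -> Prop) -> Prop) b :
  is_prime_ideal b -> S b -> prime_meet S b.
Proof.
move=> hpb hSb; exists 1%N, (fun _ => b); split=> [i _ | r]; first by split.
by split=> [br i _ | /(_ 0%N isT)].
Qed.

Lemma prime_meetI S (b b1 b2 : R -> Prop) : prime_meet S b1 -> prime_meet S b2 ->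
  (forall r, b r <-> b1 r /\ b2 r) -> prime_meet S b.
Proof.
move=> [t1 [P1 [hP1 e1]]] [t2 [P2 [hP2 e2]]] eb.
exists (t1 + t2)%N, (fun i => if (i < t1)%N then P1 i else P2 (i - t1)%N).
split=> [i hi | r].
  by case: ifP => hit; [apply: hP1 | apply: hP2; lia].
rewrite eb e1 e2; split=> [[H1 H2] i hi | H].
  by case: ifP => hit; [apply: H1 | apply: H2; lia].
split=> [i hi | i hi].
  by have := H i ltac:(lia); rewrite hi.
by have := H (t1 + i)%N ltac:(lia); rewrite ltnNge leq_addr addKn.
Qed.

Lemma colon_colon_meet (b J : R -> Prop) : is_ideal b ->
  (forall r, b (r * r) -> b r) ->
  forall r, b r <-> colon b J r /\ colon b (colon b J) r.
Proof.
move=> hb b_rad r; split=> [br | [bJr bbJr]]; first by split; apply: colon_incl.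
exact/b_rad/bbJr.
Qed.

Lemma not_prime_ideal (b : R -> Prop) : ~ b 1 -> is_ideal b -> ~ is_prime_ideal b ->
  exists a c, [/\ b (a * c), ~ b a & ~ b c].
Proof.
move=> b1 hb hnp; apply: NNPP => hnone; apply: hnp; split=> //; split=> // a c hac.
case: (classic (b a)) => ha; [by left | right].
by apply: NNPP => hc; apply: hnone; exists a, c.
Qed.

Lemma noetherian_prime_meet (S : (R -> Prop) -> Prop) : noetherian R ->
  (forall b, S b -> is_ideal b) ->
  (forall b J, S b -> S (colon b J)) ->
  (forall b r, S b -> b (r * r) -> b r) ->
  forall b, S b -> prime_meet S b.
Proof.
move=> hR S_ideal S_colon S_rad b hSb.
apply: (@noetherian_ind (fun b => S b -> prime_meet S b) hR _ b (S_ideal b hSb) hSb).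
move=> {hSb}b hb IH hSb.
case: (classic (b 1)) => [b1 | nb1]; first exact: prime_meet_full.
case: (classic (is_prime_ideal b)) => [hpb | hnp]; first exact: prime_meet_prime.
have [a [c [hac ha hc]]] := not_prime_ideal nb1 hb hnp.
pose ba := colon b (eq^~ a).
have hSa : S ba by apply: S_colon.
have hSba : S (colon b ba) by apply: S_colon.
apply: (prime_meetI (IH _ _ _ hSa) (IH _ _ _ hSba)).
- exact: S_ideal.
- split=> [r | ]; first exact: colon_incl.
  by exists c; split=> // _ ->; rewrite mulrC.
- exact: S_ideal.
- split=> [r | ]; first exact: colon_incl.
  by exists a; split=> // j hj; rewrite mulrC; apply: hj.
- by apply: colon_colon_meet => // r; apply: S_rad.
Qed.

End IdealDecomposition.

Section FrobeniusAction.
Variables (R : comNzRingType) (p : nat) (G : lmodType R) (phi : G -> G).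
Hypothesis hphi : frob_skew p phi.

Lemma frob_skew0 : phi 0 = 0.
Proof.
have e : phi 0 + phi 0 = phi 0 + 0 by rewrite addr0 -(proj1 hphi) addr0.
exact: addrI e.
Qed.

Lemma iter_frob_skew0 n : iter n phi 0 = 0.
Proof. by elim: n => //= n ->; rewrite frob_skew0. Qed.

Lemma iter_frob_skewD n g h : iter n phi (g + h) = iter n phi g + iter n phi h.
Proof. by elim: n => //= n ->; rewrite (proj1 hphi). Qed.

Lemma iter_frob_skewZ n (r : R) g :
  iter n phi (r *: g) = r ^+ (p ^ n) *: iter n phi g.
Proof.
elim: n => [|n IH] /=; first by rewrite expr1.
by rewrite IH (proj2 hphi) -exprM expnSr.
Qed.

Definition grann_coef (A : G -> Prop) (r : R) : Prop :=
  forall g, A g -> forall n, r *: iter n phi g = 0.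

Definition annG (b : R -> Prop) (g : G) : Prop :=
  forall r, b r -> forall n, r *: iter n phi g = 0.

Definition grann_closed (b : R -> Prop) : Prop :=
  forall r, b r <-> grann_coef (annG b) r.

Lemma grann_coef_ideal A : is_ideal (grann_coef A).
Proof.
split; first by move=> g _ n; rewrite scale0r.
split=> [a c ha hc g hg n | s a ha g hg n].
  by rewrite scalerDl ha ?hc ?addr0.
by rewrite -scalerA ha ?scaler0.
Qed.

Lemma grann_closed_ideal b : grann_closed b -> is_ideal b.
Proof.
move=> hb; have [h0 [hD hM]] := grann_coef_ideal (annG b).
split; first exact/hb.
by split=> [a c /hb ha /hb hc | s a /hb ha]; apply/hb; [apply: hD | apply: hM].
Qed.

Lemma grann_closedP b A : (forall r, b r <-> grann_coef A r) -> grann_closed b.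
Proof.
move=> hb r; split=> [br g hg | hr]; first exact: hg.
by apply/hb => g hA n; apply: hr n => s /hb hs m; apply: hs.
Qed.

Lemma annG_iter b m g : annG b g -> annG b (iter m phi g).
Proof. by move=> hg r br n; rewrite -iterD; apply: hg. Qed.

Lemma annG_submodule b : is_Rxf_submodule phi (annG b).
Proof.
split; first by move=> r _ n; rewrite iter_frob_skew0 scaler0.
split=> [g h hg hh r br n | ].
  by rewrite iter_frob_skewD scalerDr hg ?hh ?addr0.
split=> [s g hg r br n | ].
  by rewrite iter_frob_skewZ scalerA mulrC -scalerA hg ?scaler0.
exact: (annG_iter 1).
Qed.

Hypothesis p_gt0 : (0 < p)%N.

Lemma iter_frob_skewZ_pred n (r : R) g :
  iter n phi (r *: g) = r ^+ (p ^ n).-1 *: (r *: iter n phi g).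
Proof.
have p_n_gt0 : (0 < p ^ n)%N by rewrite expn_gt0 p_gt0.
by rewrite iter_frob_skewZ scalerA -exprSr prednK.
Qed.

Lemma grann_closed_colon b J : grann_closed b -> grann_closed (colon b J).
Proof.
move=> hb.
apply: (@grann_closedP _
  (fun g => exists j h m, [/\ J j, annG b h & g = j *: iter m phi h])).
move=> r; split=> [hr _ [j [h [m [hj hh ->]]]] n | hr j hj].
  rewrite iter_frob_skewZ_pred -iterD !scalerA -mulrA mulrCA -scalerA.
  by move/hb: (hr j hj) => ->; rewrite ?scaler0.
apply/hb => h hh m; rewrite -scalerA.
by apply: (hr _ _ 0%N); exists j, h, m.
Qed.

Hypothesis htf : x_torsion_free phi.

Lemma iter_torsion_free n g : iter n phi g = 0 -> g = 0.
Proof. by elim: n g => [|n IH] g //= /htf /IH. Qed.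

Lemma scale_iter_eq0 n (r : R) g : r *: iter n phi g = 0 -> r *: g = 0.
Proof.
move=> hr; apply: (@iter_torsion_free n).
by rewrite iter_frob_skewZ_pred hr scaler0.
Qed.

Lemma G_specialE b : G_special phi b <-> grann_closed b.
Proof.
split=> [[_ [N [_ hN]]] | hb].
  apply: (@grann_closedP b N) => r; split=> [br g hg n | hr].
    exact: (proj2 (hN n r) br).
  by apply/(hN 0%N r) => g hg; apply: hr.
split; first exact: grann_closed_ideal.
exists (annG b); split; first exact: annG_submodule.
move=> n r; split=> [hr | br g hg]; last exact: hg.
apply/hb => g hg m; apply: (@scale_iter_eq0 n); apply: hr; exact: annG_iter.
Qed.

(* [x (r g) = r^p (x g)] and [r^p] lies in [b] together with [r^2]. *)
Lemma grann_closed_radical b r : (1 < p)%N -> grann_closed b -> b (r * r) -> b r.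
Proof.
move=> hp hb brr; have b_ideal := grann_closed_ideal hb.
have brp : b (r ^+ p).
  by rewrite -(subnK hp) exprD mulrC; apply: ideal_mulr.
apply/hb => g hg m; apply: htf; rewrite (proj2 hphi).
by move/hb: brp => /(_ g hg m.+1).
Qed.

Lemma grann_closed_bigcap (I : Type) (Q : I -> Prop) (P : I -> R -> Prop) b :
  (forall i, Q i -> grann_closed (P i)) ->
  (forall r, b r <-> (forall i, Q i -> P i r)) -> grann_closed b.
Proof.
move=> hP hb.
apply: (@grann_closedP b (fun g => exists2 i, Q i & annG (P i) g)) => r.
split=> [br g [i hi hg] n | hr]; first exact/hg/(proj1 (hb r) br).
by apply/hb => i hi; apply/hP => // g hg n; apply: hr; exists i.
Qed.

End FrobeniusAction.

Unset Implicit Arguments.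

Theorem corollary3p7 (R : comNzRingType) (p : nat) (hp : p \in [pchar R])
    (hR : noetherian R) (G : lmodType R) (phi : G -> G)
    (hphi : frob_skew p phi) (htf : x_torsion_free phi) :
  forall b : R -> Prop,
    G_special phi b <->
    exists (t : nat) (P : nat -> R -> Prop),
      (forall i, (i < t)%N -> is_prime_ideal (P i) /\ G_special phi (P i)) /\
      (forall r, b r <-> (forall i, (i < t)%N -> P i r)).
Proof.
have hp1 : (1 < p)%N by apply/prime_gt1/(pcharf_prime hp).
have closedE := G_specialE hphi (ltnW hp1) htf.
move=> b; split=> [|[t [P [hP hb]]]].
  apply: noetherian_prime_meet => // [b' [] // | b' J /closedE hb' | b' r /closedE hb'].
    exact/closedE/(grann_closed_colon hphi (ltnW hp1)).
  exact: (grann_closed_radical hphi htf hp1 hb').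
apply/closedE/(grann_closed_bigcap _ hb) => i /hP [_ /closedE] //.
Qed.
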